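(* Let $T\cup\{\varphi\}$ be a set of $\mathcal P^{\mathbf A}$-sentences. Then $\varphi$ is preserved under substructures of models of $T$ (i.e. whenever $\langle\mathbf A,\mathbf M\rangle\subseteq\langle\mathbf A,\mathbf N\rangle$ are models of $T$ and $\|\varphi\|_{\mathbf N}=1$, then $\|\varphi\|_{\mathbf M}=1$) if and only if there is a universal $\mathcal P^{\mathbf A}$-sentence $\psi$ that is 1-equivalent to $\varphi$ modulo $T$, i.e. for every model $\langle\mathbf A,\mathbf M\rangle$ of $T$, $\|\varphi\|_{\mathbf M}=1$ iff $\|\psi\|_{\mathbf M}=1$.
   Context: Fix a finite MTL-chain $\mathbf{A}$ (a finite linearly ordered MTL-algebra, possibly expanded with further operations), with top $1$ and bottom $0$. For a predicate language $\mathcal P$ containing a crisp equality symbol $\approx$, an $\mathbf{A}$-structure $\langle \mathbf A,\mathbf M\rangle$ consists of a nonempty domain $M$, functions $F_{\mathbf M}:M^n\to M$ for $n$-ary function symbols, and maps $P_{\mathbf M}:M^n\to A$ for $n$-ary predicate symbols; $\approx$ takes value $1$ on equal and $0$ on distinct elements. Truth values $\|\cdot\|_{\mathbf M}$ are computed Tarski-style: connectives by the operations of $\mathbf A$, $\forall$ by infimum, $\exists$ by supremum over the domain. A model of $T$ is a structure in which all sentences of $T$ have value $1$. $\mathcal P^{\mathbf A}$ is $\mathcal P$ expanded by a truth constant $\overline a$ for each $a\in A$, always interpreted as $a$; all structures are over the fixed $\mathbf A$. $\langle\mathbf A,\mathbf M\rangle\subseteq\langle\mathbf A,\mathbf N\rangle$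 (substructure): $M\subseteq N$ with function and predicate symbols interpreted by restriction. A universal sentence has the form $(\forall\overrightarrow x)\psi$ with $\psi$ quantifier-free. *)

From HB Require Import structures.
From mathcomp Require Import all_boot all_order.
From Stdlib Require Import ClassicalEpsilon.
Set Implicit Arguments. Unset Strict Implicit. Unset Printing Implicit Defensive.
Import Order.TTheory.
Local Open Scope order_scope.

Definition pb (P : Prop) : bool :=
  if excluded_middle_informative P then true else false.

(* A finite MTL-chain: a finite bounded chain A (bottom 0 = \bot, top 1 = \top,
   lattice operations = meet/join of the chain) with a commutative associative
   monoid operation & with unit \top and its residuum ->.  (Integrality holds
   since \top is the top; prelinearity holds automatically in a chain.)
   It may be expanded with further operations xint o of arity xar o. *)
Record MTLchain (d : Order.disp_t) (A : finTBOrderType d) := {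
  mconj : A -> A -> A;
  mimp  : A -> A -> A;
  mconjC : commutative mconj;
  mconjA : associative mconj;
  mconj1 : right_id \top mconj;
  mresid : forall x y z : A, (mconj x y <= z) = (x <= mimp y z);
  xop : Type;
  xar : xop -> nat;
  xint : forall o : xop, ('I_(xar o) -> A) -> A }.

(* A predicate language: function symbols (constants = 0-ary) and predicate
   symbols with arities; the crisp equality is a separate built-in. *)
Record Lang := {
  Fsym : Type; far : Fsym -> nat;
  Psym : Type; par : Psym -> nat }.

Unset Implicit Arguments.
Inductive term (L : Lang) : Type :=
| Var of nat
| App (f : Fsym L) of ('I_(far f) -> term L).
Set Implicit Arguments.
Arguments Var {L} _.
Arguments App {L} f _.

Unset Implicit Arguments.
Inductive form (L : Lang) (A : Type) (X : Type) (ar : X -> nat) : Type :=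
| FPred (p : Psym L) of ('I_(par p) -> term L)
| FEq of term L & term L
| FConst of A
| FConj of form L A X ar & form L A X ar
| FImp of form L A X ar & form L A X ar
| FMeet of form L A X ar & form L A X ar
| FJoin of form L A X ar & form L A X ar
| FOp (o : X) of ('I_(ar o) -> form L A X ar)
| FAll of nat & form L A X ar
| FEx of nat & form L A X ar.
Set Implicit Arguments.
Arguments FPred {L A X ar} p _.
Arguments FEq {L A X ar} _ _.
Arguments FConst {L A X ar} _.
Arguments FConj {L A X ar} _ _.
Arguments FImp {L A X ar} _ _.
Arguments FMeet {L A X ar} _ _.
Arguments FJoin {L A X ar} _ _.
Arguments FOp {L A X ar} o _.
Arguments FAll {L A X ar} _ _.
Arguments FEx {L A X ar} _ _.

Definition fml (L : Lang) d (A : finTBOrderType d) (S : MTLchain A) :=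
  form L A (xop S) (@xar d A S).

Record structure (L : Lang) (A : Type) := {
  dom : Type;
  dom_ne : inhabited dom;
  fint : forall f : Fsym L, ('I_(far f) -> dom) -> dom;
  pint : forall p : Psym L, ('I_(par p) -> dom) -> A }.

Fixpoint teval (L : Lang) (A : Type) (M : structure L A) (e : nat -> dom M)
    (t : term L) : dom M :=
  match t with
  | Var n => e n
  | App f ts => @fint _ _ M f (fun i => teval e (ts i))
  end.

Definition upd (D : Type) (e : nat -> D) (x : nat) (m : D) : nat -> D :=
  fun n => if n == x then m else e n.

Definition infA d (A : finTBOrderType d) (D : Type) (f : D -> A) : A :=
  \join_(a | pb (forall m, a <= f m)) a.
Definition supA d (A : finTBOrderType d) (D : Type) (f : D -> A) : A :=
  \meet_(a | pb (forall m, f m <= a)) a.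

Fixpoint eval (L : Lang) d (A : finTBOrderType d) (S : MTLchain A)
    (M : structure L A) (e : nat -> dom M) (phi : fml L S) : A :=
  match phi with
  | FPred p ts => @pint _ _ M p (fun i => teval e (ts i))
  | FEq t1 t2 => if pb (teval e t1 = teval e t2) then \top else \bot
  | FConst a => a
  | FConj p q => mconj S (eval e p) (eval e q)
  | FImp p q => mimp S (eval e p) (eval e q)
  | FMeet p q => Order.meet (eval e p) (eval e q)
  | FJoin p q => Order.join (eval e p) (eval e q)
  | FOp o args => @xint _ _ S o (fun i => eval e (args i))
  | FAll x p => infA (fun m => eval (upd e x m) p)
  | FEx x p => supA (fun m => eval (upd e x m) p)
  end.

Fixpoint tfree (L : Lang) (x : nat) (t : term L) : bool :=
  match t with
  | Var n => n == x
  | App f ts => [exists i, tfree x (ts i)]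
  end.

Fixpoint free (L : Lang) (A X : Type) (ar : X -> nat) (x : nat)
    (phi : form L A X ar) : bool :=
  match phi with
  | FPred p ts => [exists i, tfree x (ts i)]
  | FEq t1 t2 => tfree x t1 || tfree x t2
  | FConst _ => false
  | FConj p q | FImp p q | FMeet p q | FJoin p q => free x p || free x q
  | FOp o args => [exists i, free x (args i)]
  | FAll y p | FEx y p => (x != y) && free x p
  end.

Definition sentence (L : Lang) (A X : Type) (ar : X -> nat)
  (phi : form L A X ar) : Prop := forall x, ~~ free x phi.

Fixpoint qfree (L : Lang) (A X : Type) (ar : X -> nat)
    (phi : form L A X ar) : bool :=
  match phi with
  | FPred _ _ | FEq _ _ | FConst _ => true
  | FConj p q | FImp p q | FMeet p q | FJoin p q => qfree p && qfree q
  | FOp o args => [forall i, qfree (args i)]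
  | FAll _ _ | FEx _ _ => false
  end.

Definition universal (L : Lang) (A X : Type) (ar : X -> nat)
  (phi : form L A X ar) : Prop :=
  exists (xs : seq nat) (psi : form L A X ar),
    qfree psi /\ phi = foldr (@FAll L A X ar) psi xs.

(* ||phi||_M = 1 (for a sentence phi the value does not depend on e) *)
Definition holds (L : Lang) d (A : finTBOrderType d) (S : MTLchain A)
  (M : structure L A) (phi : fml L S) : Prop :=
  forall e : nat -> dom M, eval e phi = \top.

Definition model (L : Lang) d (A : finTBOrderType d) (S : MTLchain A)
  (T : fml L S -> Prop) (M : structure L A) : Prop :=
  forall chi, T chi -> holds M chi.

Definition substr (L : Lang) (A : Type) (M N : structure L A)
  (h : dom M -> dom N) : Prop :=
  injective h /\
  (forall f args, h (@fint _ _ M f args) = @fint _ _ N f (fun i => h (args i))) /\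
  (forall p args, @pint _ _ N p (fun i => h (args i)) = @pint _ _ M p args).

Definition preserved_sub (L : Lang) d (A : finTBOrderType d) (S : MTLchain A)
  (T : fml L S -> Prop) (phi : fml L S) : Prop :=
  forall (M N : structure L A) (h : dom M -> dom N),
    substr h -> model T M -> model T N -> holds N phi -> holds M phi.

(* Quantifier-free formulas take the same values in a substructure, so universal
   sentences are preserved.  Conversely, let Gamma be the universal 1-consequences of
   phi modulo T, and let M be a model of T and Gamma.  Every finite part of the diagram
   of M is realized in a model of T and phi: otherwise "this part never holds", written
   (forall xs)(delta -> c) with c the coatom of A, would lie in Gamma and fail in M.
   The ultraproduct of these realizations is a model of T and phi containing M as a
   substructure, hence M satisfies phi.  Likewise, if no finite conjunction of Gamma
   were 1-equivalent to phi, an ultraproduct of countermodels would be a model of T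
   and Gamma refuting phi.  Los's theorem holds for A-valued ultraproducts because A
   is a finite chain: U-limits of truth values exist and quantifiers are attained. *)

From mathcomp Require Import all_boot all_order.
From mathcomp Require Import boolp classical_sets filter.
From Stdlib Require Import ClassicalEpsilon.
Set Implicit Arguments. Unset Strict Implicit. Unset Printing Implicit Defensive.
Import Order.TTheory.
Local Open Scope order_scope.

Lemma pbP (P : Prop) : reflect P (pb P).
Proof. by rewrite /pb; case: excluded_middle_informative => ?; constructor. Qed.

Section FiniteChain.
Variables (d : Order.disp_t) (A : finTBOrderType d).

Lemma infA_lb (D : Type) (f : D -> A) m : infA f <= f m.
Proof. by apply/joinsP => a /pbP; apply. Qed.

Lemma infA_glb (D : Type) (f : D -> A) a : (forall m, a <= f m) -> a <= infA f.
Proof. by move=> fa; apply: (@joins_sup _ _ _ a) => //; apply/pbP. Qed.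

Lemma supA_ub (D : Type) (f : D -> A) m : f m <= supA f.
Proof. by apply/meetsP => a /pbP; apply. Qed.

Lemma supA_lub (D : Type) (f : D -> A) a : (forall m, f m <= a) -> supA f <= a.
Proof. by move=> fa; apply: (@meets_inf _ _ _ a) => //; apply/pbP. Qed.

Lemma infA_attained (D : Type) (f : D -> A) : inhabited D -> exists m, f m = infA f.
Proof.
move=> [m0]; pose V a := pb (exists m, f m = a).
have Vf0 : V (f m0) by apply/pbP; exists m0.
case: (arg_minP id Vf0) => a /pbP [m <-] fmin; exists m.
by apply/eqP; rewrite eq_le infA_lb infA_glb // => m'; apply/fmin/pbP; exists m'.
Qed.

Lemma supA_attained (D : Type) (f : D -> A) : inhabited D -> exists m, f m = supA f.
Proof.
move=> [m0]; pose V a := pb (exists m, f m = a).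
have Vf0 : V (f m0) by apply/pbP; exists m0.
case: (arg_maxP id Vf0) => a /pbP [m <-] fmax; exists m.
by apply/eqP; rewrite eq_le supA_ub supA_lub // => m'; apply/fmax/pbP; exists m'.
Qed.

Lemma infA_eq1 (D : Type) (f : D -> A) : infA f = \top <-> forall m, f m = \top.
Proof.
split=> [f1 m|f1]; apply/eqP; rewrite -le1x; first by rewrite -f1 infA_lb.
by apply: infA_glb => m; rewrite f1.
Qed.

Lemma exists_coatom : \top != \bot :> A ->
  exists c : A, c != \top /\ forall a : A, a != \top -> a <= c.
Proof.
move=> top_neq_bot; have nbot : [pred a : A | a != \top] \bot by rewrite /= eq_sym.
by case: (arg_maxP id nbot) => c c1 cmax; exists c.
Qed.

End FiniteChain.

Lemma fine_ultrafilter (X : Type) :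
  exists U : set_system (seq X), UltraFilter U /\ forall x, U (fun F => List.In x F).
Proof.
pose above (F0 F : seq X) := forall x, List.In x F0 -> List.In x F.
have Uproper : ProperFilter (filter_from setT above).
  apply: filter_from_proper => [|F0 _]; last by exists F0.
  apply: filter_fromT_filter => [|F1 F2]; first by exists [::].
  by exists (F1 ++ F2) => F sub; split=> x xF; apply/sub/List.in_or_app; [left|right].
have [U [ultraU sub]] := ultraFilterLemma Uproper.
by exists U; split=> // x; apply: sub; exists [:: x] => // F; apply; left.
Qed.

Lemma dependent_choice (I : Type) (T : I -> Type) (P : forall i, T i -> Prop) :
  (forall i, exists y, P i y) -> exists y : forall i, T i, forall i, P i (y i).
Proof. by move=> w; exists (fun i => sval (cid (w i))) => i; apply: svalP. Qed.

Inductive fact (L : Lang) (D : Type) :=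
| FactFun (f : Fsym L) of ('I_(far f) -> D)
| FactPred (p : Psym L) of ('I_(par p) -> D)
| FactNeq of D & D.
Arguments FactFun {L D} f _.
Arguments FactPred {L D} p _.
Arguments FactNeq {L D} _ _.

Definition preserves_fact (L : Lang) (A : Type) (M N : structure L A)
    (g : dom M -> dom N) (fa : fact L (dom M)) : Prop :=
  match fa with
  | FactFun f args => g (fint args) = fint (fun j => g (args j))
  | FactPred p args => pint (fun j => g (args j)) = pint args
  | FactNeq a b => a <> b -> g a <> g b
  end.

Definition fact_elems (L : Lang) (A : Type) (M : structure L A)
    (fa : fact L (dom M)) : seq (dom M) :=
  match fa with
  | FactFun f args => fint args :: map args (enum 'I_(far f))
  | FactPred p args => map args (enum 'I_(par p))
  | FactNeq a b => [:: a; b]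
  end.
Arguments fact_elems {L A M} fa.

Section Ultraproduct.
Variables (d : Order.disp_t) (A : finTBOrderType d) (S : MTLchain A) (L : Lang).
Variables (I : Type) (U : set_system I) (Ms : I -> structure L A).
Hypothesis U_ultra : UltraFilter U.

Definition ulim (b : I -> A) : A :=
  epsilon (inhabits \top) (fun a => U (fun i => b i = a)).

Lemma ulim_spec b : U (fun i => b i = ulim b).
Proof.
apply: (epsilon_spec (inhabits \top) (fun a => U (fun i => b i = a))).
apply: contrapT => /forallNP no_lim.
have b_avoids a : U (fun i => b i <> a).
  by case: (in_ultra_setVsetC (fun i => b i = a) U_ultra) => // /no_lim.
have [i bi] := filter_ex (filter_forall _ b_avoids).
exact: (bi (b i)).
Qed.

Lemma ulimE b a : U (fun i => b i = a) -> ulim b = a.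
Proof. by move=> ba; have [i [<- <-]] := filter_ex (filterI ba (ulim_spec b)). Qed.

Lemma ulim_const a : ulim (fun=> a) = a.
Proof. by apply: ulimE; apply: filterE. Qed.

Lemma ulim2 (op : A -> A -> A) b c : ulim (fun i => op (b i) (c i)) = op (ulim b) (ulim c).
Proof. by apply: ulimE; apply: filterS2 _ (ulim_spec b) (ulim_spec c) => i -> ->. Qed.

Lemma ulimn n (op : ('I_n -> A) -> A) (b : 'I_n -> I -> A) :
  ulim (fun i => op (fun j => b j i)) = op (fun j => ulim (b j)).
Proof.
apply: ulimE; apply: filterS (filter_forall _ (fun j => ulim_spec (b j))) => i bE.
by congr op; apply: funext => j; rewrite bE.
Qed.

Lemma ulim_le b c : (forall i, b i <= c i) -> ulim b <= ulim c.
Proof.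
move=> bc; have bIc : (fun i => Order.meet (b i) (c i)) = b by apply: funext => i; apply/meet_idPl.
by apply/meet_idPl; rewrite -ulim2 bIc.
Qed.

Lemma ulim_congr b c : U (fun i => b i = c i) -> ulim b = ulim c.
Proof. by move=> bc; apply: ulimE; apply: filterS2 _ bc (ulim_spec c) => i ->. Qed.

Lemma ulim_if (P : I -> Prop) (a b : A) :
  ulim (fun i => if pb (P i) then a else b) = if pb (U P) then a else b.
Proof.
case: (in_ultra_setVsetC P U_ultra) => [UP|UnP].
  by rewrite (introT (pbP _) UP); apply: ulimE; apply: filterS UP => i /pbP ->.
have /negbTE -> : ~~ pb (U P).
  by apply/pbP => UP; have [i []] := filter_ex (filterI UP UnP).
by apply: ulimE; apply: filterS UnP => i /(introN (pbP _)) /negbTE ->.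
Qed.

Definition ueq (x y : forall i, dom (Ms i)) : Prop := U (fun i => x i = y i).

Lemma ueq_refl x : ueq x x.
Proof. exact: filterE _. Qed.

Lemma ueq_sym x y : ueq x y -> ueq y x.
Proof. by apply: filterS => i ->. Qed.

Lemma ueq_trans x y z : ueq x y -> ueq y z -> ueq x z.
Proof. by move=> xy yz; apply: filterS2 _ xy yz => i ->. Qed.

Definition uclass_type := {P : (forall i, dom (Ms i)) -> Prop | exists x, P = ueq x}.

Definition uclass (x : forall i, dom (Ms i)) : uclass_type := exist _ (ueq x) (ex_intro _ x erefl).

Definition urep (m : uclass_type) : forall i, dom (Ms i) := sval (cid (svalP m)).

Lemma urepK m : uclass (urep m) = m.
Proof.
by case: m => P P_class; rewrite /urep /uclass /=; case: cid => x /= Px; apply: eq_exist.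
Qed.

Lemma uclass_eqP x y : uclass x = uclass y <-> ueq x y.
Proof.
split=> [/(congr1 sval) /= xy|xy]; first by rewrite xy; apply: ueq_refl.
apply: eq_exist; apply: funext => z; rewrite propeqE; split; last exact: ueq_trans.
by apply: ueq_trans; apply: ueq_sym.
Qed.

Lemma ueq_urep x : ueq (urep (uclass x)) x.
Proof. by apply/uclass_eqP; rewrite urepK. Qed.

Definition ne_point (i : I) : dom (Ms i) := epsilon (dom_ne (Ms i)) (fun=> True).

Definition ufint (f : Fsym L) (args : 'I_(far f) -> uclass_type) : uclass_type :=
  uclass (fun i => fint (fun j => urep (args j) i)).
Definition upint (p : Psym L) (args : 'I_(par p) -> uclass_type) : A :=
  ulim (fun i => pint (fun j => urep (args j) i)).

Definition uprod : structure L A :=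
  {| dom := uclass_type; dom_ne := inhabits (uclass ne_point); fint := ufint; pint := upint |}.

Lemma ufint_uclass f (xs : 'I_(far f) -> forall i, dom (Ms i)) :
  ufint (fun j => uclass (xs j)) = uclass (fun i => fint (fun j => xs j i)).
Proof.
apply/uclass_eqP; apply: filterS (filter_forall _ (fun j => ueq_urep (xs j))) => i xsE.
by congr fint; apply: funext => j; rewrite xsE.
Qed.

Lemma upint_uclass p (xs : 'I_(par p) -> forall i, dom (Ms i)) :
  upint (fun j => uclass (xs j)) = ulim (fun i => pint (fun j => xs j i)).
Proof.
apply: ulim_congr; apply: filterS (filter_forall _ (fun j => ueq_urep (xs j))) => i xsE.
by congr pint; apply: funext => j; rewrite xsE.
Qed.

Definition uenv (X : forall i, nat -> dom (Ms i)) : nat -> dom uprod :=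
  fun n => uclass (fun i => X i n).

Lemma uenv_urep (e : nat -> dom uprod) : e = uenv (fun i n => urep (e n) i).
Proof. by apply: funext => n; rewrite /uenv urepK. Qed.

Lemma upd_uenv X x y : upd (uenv X) x (uclass y) = uenv (fun i => upd (X i) x (y i)).
Proof. by apply: funext => n; rewrite /upd /uenv; case: (n == x). Qed.

Lemma teval_uenv X t : teval (uenv X) t = uclass (fun i => teval (X i) t).
Proof.
elim: t => [//|f ts IH] /=; rewrite -ufint_uclass; congr ufint.
by apply: funext => j; rewrite IH.
Qed.

Lemma infA_uclass (G : dom uprod -> A) (g : forall i, dom (Ms i) -> A) :
  (forall y, G (uclass y) = ulim (fun i => g i (y i))) ->
  infA G = ulim (fun i => infA (g i)).
Proof.
move=> GE; apply/eqP; rewrite eq_le; apply/andP; split.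
  have [y yE] := dependent_choice (fun i => infA_attained (g i) (dom_ne (Ms i))).
  apply: le_trans (infA_lb _ (uclass y)) _; rewrite GE.
  by apply: ulim_le => i; rewrite yE.
apply: infA_glb => m; rewrite -(urepK m) GE.
by apply: ulim_le => i; apply: infA_lb.
Qed.

Lemma supA_uclass (G : dom uprod -> A) (g : forall i, dom (Ms i) -> A) :
  (forall y, G (uclass y) = ulim (fun i => g i (y i))) ->
  supA G = ulim (fun i => supA (g i)).
Proof.
move=> GE; apply/eqP; rewrite eq_le; apply/andP; split; last first.
  have [y yE] := dependent_choice (fun i => supA_attained (g i) (dom_ne (Ms i))).
  apply: le_trans _ (supA_ub _ (uclass y)); rewrite GE.
  by apply: ulim_le => i; rewrite yE.
apply: supA_lub => m; rewrite -(urepK m) GE.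
by apply: ulim_le => i; apply: supA_ub.
Qed.

Theorem los (phi : fml L S) X : eval (uenv X) phi = ulim (fun i => eval (X i) phi).
Proof.
elim: phi X => [p ts|t1 t2|a|p IHp q IHq|p IHp q IHq|p IHp q IHq|p IHp q IHq|o args IH|x p IH|x p IH] X /=.
- rewrite -upint_uclass; congr upint.
  by apply: funext => j; rewrite teval_uenv.
- rewrite !teval_uenv ulim_if; congr (if pb _ then _ else _).
  by rewrite propeqE; apply: uclass_eqP.
- by rewrite ulim_const.
- by rewrite IHp IHq ulim2.
- by rewrite IHp IHq ulim2.
- by rewrite IHp IHq (ulim2 Order.meet).
- by rewrite IHp IHq (ulim2 Order.join).
- rewrite (ulimn (@xint _ _ S o) (fun j i => eval (X i) (args j))); congr xint.
  by apply: funext => j; rewrite IH.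
- by apply: infA_uclass => y; rewrite upd_uenv IH.
- by apply: supA_uclass => y; rewrite upd_uenv IH.
Qed.

Lemma uprod_holds (phi : fml L S) : holds uprod phi <-> U (fun i => holds (Ms i) phi).
Proof.
split=> [phi1|phi1 e]; last first.
  rewrite (uenv_urep e) los; apply: ulimE.
  by apply: filterS phi1 => i; apply.
case: (in_ultra_setVsetC (fun i => holds (Ms i) phi) U_ultra) => // nphi1.
have [X XE] : exists X : forall i, nat -> dom (Ms i),
    forall i, ~ holds (Ms i) phi -> eval (X i) phi <> \top.
  apply: (@dependent_choice _ (fun i => nat -> dom (Ms i))
    (fun i e => ~ holds (Ms i) phi -> eval e phi <> \top)) => i.
  case: (EM (holds (Ms i) phi)) => [holds_i|/existsNP [e ee]]; last by exists e.
  by exists (fun=> ne_point i) => /(_ holds_i).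
have := phi1 (uenv X); rewrite los => limE.
have [i [/XE ni]] := filter_ex (filterI nphi1 (ulim_spec (fun i => eval (X i) phi))).
by rewrite limE.
Qed.

Lemma uprod_model (T : fml L S -> Prop) : (forall i, model T (Ms i)) -> model T uprod.
Proof. by move=> MsT chi Tchi; apply/uprod_holds; apply: filterE => i; apply: MsT. Qed.

Lemma substr_uclass (M : structure L A) (g : forall i, dom M -> dom (Ms i)) :
  (forall fa, U (fun i => preserves_fact (g i) fa)) ->
  substr (fun m : dom M => uclass (fun i => g i m) : dom uprod).
Proof.
move=> g_pres; split; [|split].
- move=> m1 m2 /uclass_eqP gE; apply: contrapT => m12.
  have [i [gi /(_ m12)]] := filter_ex (filterI gE (g_pres (FactNeq m1 m2))).
  by [].
- move=> f args /=; rewrite ufint_uclass; apply/uclass_eqP.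
  exact: g_pres (FactFun f args).
- move=> p args /=; rewrite upint_uclass; apply: ulimE.
  exact: g_pres (FactPred p args).
Qed.

End Ultraproduct.

Lemma In_mem (T : eqType) (x : T) (s : seq T) : List.In x s -> x \in s.
Proof. by elim: s => [|y s IH] //= [->|/IH xs]; rewrite inE ?eqxx ?xs ?orbT. Qed.

Definition FAlls (L : Lang) (A X : Type) (ar : X -> nat) (xs : seq nat)
  (q : form L A X ar) : form L A X ar := foldr (@FAll L A X ar) q xs.

Section Formulas.
Variables (d : Order.disp_t) (A : finTBOrderType d) (S : MTLchain A) (L : Lang).
Implicit Types (M N : structure L A) (p q psi : fml L S).

Lemma mimp_eq1 (a b : A) : mimp S a b = \top <-> a <= b.
Proof.
have -> : (a <= b) = (\top <= mimp S a b) by rewrite -mresid mconjC mconj1.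
by rewrite le1x; split=> [->|/eqP].
Qed.

Lemma eval_FMeet_eq1 M (e : nat -> dom M) p q :
  eval e (FMeet p q) = \top <-> eval e p = \top /\ eval e q = \top.
Proof.
split=> [/eqP|[/= -> ->]]; last exact: meetxx.
by rewrite /= meet_eq1 => /andP [/eqP -> /eqP ->].
Qed.

Lemma eval_FEq_eq1 M (e : nat -> dom M) t1 t2 : \top != \bot :> A ->
  eval e (FEq t1 t2 : fml L S) = \top <-> teval e t1 = teval e t2.
Proof.
move=> top_neq_bot /=; case: pbP => t12; split=> // bot_eq_top.
by move: top_neq_bot; rewrite bot_eq_top eqxx.
Qed.

Lemma holds_FAll M x p : holds M (FAll x p) <-> holds M p.
Proof.
split=> [px e|px e]; last by apply/infA_eq1 => m; apply: px.
suff <- : upd e x (e x) = e by move/infA_eq1: (px e); apply.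
by apply: funext => n; rewrite /upd; case: eqP => // ->.
Qed.

Lemma holds_FAlls M xs q : holds M (FAlls xs q) <-> holds M q.
Proof. by elim: xs => [|x xs IH] //=; rewrite holds_FAll. Qed.

Lemma free_FAlls x xs q : free x (FAlls xs q) = (x \notin xs) && free x q.
Proof. by elim: xs => [|y xs IH] //=; rewrite IH inE negb_or andbA. Qed.

Lemma sentence_FAlls xs q : (forall x, free x q -> x \in xs) -> sentence (FAlls xs q).
Proof. by move=> qxs x; rewrite free_FAlls; apply/nandP; case: (boolP (free x q)) => [/qxs ->|]; [left|right]. Qed.

Definition bigFMeet (qs : seq (fml L S)) : fml L S := foldr FMeet (FConst \top) qs.

Lemma eval_bigFMeet_eq1 M (e : nat -> dom M) qs :
  eval e (bigFMeet qs) = \top <-> forall q, List.In q qs -> eval e q = \top.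
Proof.
elim: qs => [|q qs IH] /=; first by split.
rewrite -/(bigFMeet qs) (eval_FMeet_eq1 _ q (bigFMeet qs)) IH.
split=> [[qE qsE] q' [<-|/qsE] //|qsE].
by split=> [|q' q'qs]; apply: qsE; [left|right].
Qed.

Lemma holds_bigFMeet M qs : holds M (bigFMeet qs) <-> forall q, List.In q qs -> holds M q.
Proof.
split=> [qsE q qqs e|qsE e]; first by move/eval_bigFMeet_eq1: (qsE e); apply.
by apply/eval_bigFMeet_eq1 => q /qsE; apply.
Qed.

Lemma qfree_bigFMeet qs : (forall q, List.In q qs -> qfree q) -> qfree (bigFMeet qs).
Proof. by elim: qs => [|q qs IH] //= qsE; rewrite qsE ?IH //; [move=> q' ?; apply: qsE; right|left]. Qed.

Lemma free_bigFMeet x qs : free x (bigFMeet qs) -> exists2 q, List.In q qs & free x q.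
Proof.
elim: qs => [|q qs IH] //= /orP [xq|/IH [q' q'qs xq']]; first by exists q => //; left.
by exists q' => //; right.
Qed.

Section Substructure.
Variables (M N : structure L A) (h : dom M -> dom N).
Hypothesis h_substr : substr h.

Lemma teval_substr (e : nat -> dom M) t : h (teval e t) = teval (fun n => h (e n)) t.
Proof.
elim: t => [//|f ts IH] /=; case: h_substr => _ [-> _]; congr fint.
by apply: funext => j; rewrite IH.
Qed.

Lemma eval_qfree_substr (e : nat -> dom M) q : qfree q -> eval e q = eval (fun n => h (e n)) q.
Proof.
case: h_substr => h_inj [_ h_pint].
elim: q e => [p ts|t1 t2|a|p IHp q IHq|p IHp q IHq|p IHp q IHq|p IHp q IHq|o args IH|x p IH|x p IH] e //=.
- by move=> _; rewrite -h_pint; congr pint; apply: funext => j; rewrite teval_substr.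
- move=> _; rewrite -!teval_substr; congr (if _ then _ else _).
  by apply/idP/idP => /pbP t12; apply/pbP; [rewrite t12|apply: h_inj].
- by case/andP=> qp qq; rewrite IHp // IHq.
- by case/andP=> qp qq; rewrite IHp // IHq.
- by case/andP=> qp qq; rewrite IHp // IHq.
- by case/andP=> qp qq; rewrite IHp // IHq.
- by move/forallP=> qargs; congr xint; apply: funext => j; rewrite IH.
Qed.

Lemma universal_holds_substr psi : universal psi -> holds N psi -> holds M psi.
Proof.
move=> [xs [q [qf ->]]] /(holds_FAlls N xs q) qN.
by apply/(holds_FAlls M xs q) => e; rewrite (eval_qfree_substr e qf).
Qed.

End Substructure.
End Formulas.

Lemma exists_coding (D : Type) (el : seq D) : inhabited D ->
  exists (v : D -> nat) (e : nat -> D), forall m, List.In m el -> e (v m) = m.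
Proof.
move=> [m0]; elim: el => [|a el [v [e ev]]]; first by exists (fun=> 0), (fun=> m0).
exists (fun m => if pb (m = a) then 0 else (v m).+1), (fun k => if k is k'.+1 then e k' else a).
by move=> m /= m_in; case: pbP => [->|ma] //; apply: ev; case: m_in => // am; case: ma.
Qed.

Section Diagram.
Variables (d : Order.disp_t) (A : finTBOrderType d) (S : MTLchain A) (L : Lang).
Variable M : structure L A.

(* The variable [v m] stands for the element [m] of [M]; [FactPred] pins the truth
   value of an atom by the biconditional with a truth constant. *)
Definition fact_fml (v : dom M -> nat) (fa : fact L (dom M)) : fml L S :=
  match fa with
  | FactFun f args => FEq (Var (v (fint args))) (App f (fun j => Var (v (args j))))
  | FactPred p args =>
      let atom := FPred p (fun j => Var (v (args j))) in
      FMeet (FImp atom (FConst (pint args))) (FImp (FConst (pint args)) atom)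
  | FactNeq a b =>
      if pb (a = b) then FConst \top else FImp (FEq (Var (v a)) (Var (v b))) (FConst \bot)
  end.

Lemma In_enum_map (T : Type) n (f : 'I_n -> T) j : List.In (f j) (map f (enum 'I_n)).
Proof.
have : j \in enum 'I_n by rewrite mem_enum.
by elim: (enum 'I_n) => [|k s IH] //=; rewrite inE => /orP [/eqP ->|/IH]; [left|right].
Qed.

Lemma qfree_fact_fml v fa : qfree (fact_fml v fa).
Proof. by case: fa => //= a b; case: pbP. Qed.

Lemma free_fact_fml v fa x : free x (fact_fml v fa) ->
  exists2 m, List.In m (fact_elems fa) & x = v m.
Proof.
case: fa => [f args|p args|a b] /=.
- case/orP => [/eqP <-|/existsP [j /eqP <-]]; first by exists (fint args); first left.
  by exists (args j) => //; right; apply: In_enum_map.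
- by rewrite orbF => /orP [] /existsP [j /eqP <-]; exists (args j) => //; apply: In_enum_map.
- by case: pbP => //= _; rewrite orbF => /orP [] /eqP <-; [exists a|exists b] => //; [left|right; left].
Qed.

Lemma fact_fml_preserves (N : structure L A) (e : nat -> dom N) v fa :
  \top != \bot :> A -> eval e (fact_fml v fa) = \top -> preserves_fact (fun m => e (v m)) fa.
Proof.
move=> top_neq_bot; case: fa => [f args|p args|a b].
- by move/(eval_FEq_eq1 _ _ _ _ top_neq_bot).
- by move/eval_FMeet_eq1 => [/mimp_eq1 pa /mimp_eq1 ap]; apply/eqP; rewrite eq_le pa ap.
- rewrite /=; case: pbP => [//|_] /mimp_eq1 eq_bot _ vab; move: eq_bot top_neq_bot.
  by rewrite /= vab; case: pbP => // _; rewrite lex0 => ->.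
Qed.

Lemma fact_fml_self (e : nat -> dom M) v fa :
  (forall m, List.In m (fact_elems fa) -> e (v m) = m) -> eval e (fact_fml v fa) = \top.
Proof.
case: fa => [f args|p args|a b] /= ev.
- rewrite ev; last by left.
  have -> : (fun j => e (v (args j))) = args by apply: funext => j; apply/ev/or_intror/In_enum_map.
  by case: pbP.
- have -> : (fun j => e (v (args j))) = args by apply: funext => j; apply/ev/In_enum_map.
  by rewrite (proj2 (mimp_eq1 _ _ _) (lexx _)) meetxx.
- case: pbP => //= ab; apply/mimp_eq1; rewrite !ev; [|by right; left|by left].
  by case: pbP.
Qed.

End Diagram.

Section Preservation.
Variables (d : Order.disp_t) (A : finTBOrderType d) (S : MTLchain A) (L : Lang).
Variables (T : fml L S -> Prop) (phi : fml L S).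

(* Universal sentences are kept in prenex form [(xs, q)], so that finite conjunctions
   of them are again prenex ([conj_prenex]). *)
Definition universal_consequence (xq : seq nat * fml L S) : Prop :=
  [/\ qfree xq.2, sentence (FAlls xq.1 xq.2) &
      forall N, model T N -> holds N phi -> holds N (FAlls xq.1 xq.2)].

Section Diagram_argument.
Hypothesis phi_preserved : preserved_sub T phi.
Hypothesis top_neq_bot : \top != \bot :> A.
Variable M : structure L A.
Hypothesis M_model : model T M.
Hypothesis M_consequences : forall xq, universal_consequence xq -> holds M (FAlls xq.1 xq.2).

Lemma diagram_realizable (F : seq (fact L (dom M))) :
  exists Ng : {N : structure L A & dom M -> dom N}, [/\ model T (projT1 Ng),
    holds (projT1 Ng) phi & forall fa, List.In fa F -> preserves_fact (projT2 Ng) fa].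
Proof.
apply: contrapT => /forallNP no_realization.
have [c [c_neq_top c_coatom]] := exists_coatom top_neq_bot.
pose el := List.flat_map fact_elems F.
have [v [e ev]] := exists_coding el (dom_ne M).
pose delta := bigFMeet (map (fact_fml S v) F).
pose xq := (map v el, FImp delta (FConst c)).
have in_el fa m : List.In fa F -> List.In m (fact_elems fa) -> List.In m el.
  by move=> faF mfa; apply/List.in_flat_map; exists fa.
have free_delta x : free x delta -> exists2 fa, List.In fa F & exists2 m, List.In m (fact_elems fa) & x = v m.
  move/free_bigFMeet => [_ /List.in_map_iff [fa [<- faF]] /free_fact_fml xfa].
  by exists fa.
have xq_cons : universal_consequence xq.
  split=> /=.
  - by rewrite qfree_bigFMeet // => _ /List.in_map_iff [fa [<- _]]; apply: qfree_fact_fml.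
  - apply: sentence_FAlls => x /=; rewrite orbF => /free_delta [fa faF [m mfa ->]].
    by apply/In_mem/List.in_map/(in_el fa).
  - move=> N N_model N_phi; apply/holds_FAlls => e' /=; apply/mimp_eq1.
    have [delta1|] := eqVneq (eval e' delta) \top; last exact: c_coatom.
    case: (no_realization (existT _ N (fun m => e' (v m)))); split=> // fa faF.
    apply: fact_fml_preserves => //.
    by move/eval_bigFMeet_eq1: delta1; apply; apply: List.in_map.
have /holds_FAlls /(_ e) /= /mimp_eq1 := M_consequences xq_cons.
have -> : eval e delta = \top.
  apply/eval_bigFMeet_eq1 => _ /List.in_map_iff [fa [<- faF]].
  by apply: fact_fml_self => m mfa; apply/ev/(in_el fa).
by rewrite le1x (negbTE c_neq_top).
Qed.

Lemma consequences_model_holds : holds M phi.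
Proof.
have [U [U_ultra U_fine]] := fine_ultrafilter (fact L (dom M)).
have [Ng NgP] := choice _ diagram_realizable.
pose Ns F := projT1 (Ng F).
pose h m : dom (uprod U Ns) := uclass U (fun F => projT2 (Ng F) m).
apply: (phi_preserved (h := h)) => //.
- apply: substr_uclass => // fa; apply: filterS (U_fine fa) => F faF.
  by case: (NgP F) => _ _; apply.
- by apply: uprod_model => // F; case: (NgP F).
- by apply/uprod_holds => //; apply: filterE => F; case: (NgP F).
Qed.

End Diagram_argument.
End Preservation.

Section Conjunction.
Variables (d : Order.disp_t) (A : finTBOrderType d) (S : MTLchain A) (L : Lang).
Variables (T : fml L S -> Prop) (phi : fml L S).

Definition conj_prenex (D : seq (seq nat * fml L S)) : seq nat * fml L S :=
  (flatten (map fst D), bigFMeet (map snd D)).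

Lemma holds_conj_prenex (N : structure L A) D :
  holds N (FAlls (conj_prenex D).1 (conj_prenex D).2) <->
  forall xq, List.In xq D -> holds N (FAlls xq.1 xq.2).
Proof.
rewrite holds_FAlls holds_bigFMeet; split=> [Dq xq xqD|Dxq _ /List.in_map_iff [xq [<- xqD]]].
  by apply/holds_FAlls/Dq/List.in_map.
exact/holds_FAlls/Dxq.
Qed.

Lemma universal_consequence_conj D :
  (forall xq, List.In xq D -> universal_consequence T phi xq) ->
  universal_consequence T phi (conj_prenex D).
Proof.
move=> Dcons; split=> /=.
- by apply: qfree_bigFMeet => _ /List.in_map_iff [xq [<- /Dcons []]].
- apply: sentence_FAlls => x /free_bigFMeet [_ /List.in_map_iff [xq [<- xqD]] xq2].
  have [_ /(_ x) xq_sentence _] := Dcons xq xqD.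
  apply/flattenP; exists xq.1; first exact/In_mem/List.in_map.
  by move: xq_sentence; rewrite free_FAlls xq2 andbT negbK.
- move=> N N_model N_phi; apply/holds_conj_prenex => xq /Dcons [_ _].
  exact.
Qed.

End Conjunction.

Section Universal_equivalent.
Variables (d : Order.disp_t) (A : finTBOrderType d) (S : MTLchain A) (L : Lang).
Variables (T : fml L S -> Prop) (phi : fml L S).

Definition universal_equivalent (psi : fml L S) : Prop :=
  sentence psi /\ universal psi /\
  forall M : structure L A, model T M -> (holds M phi <-> holds M psi).

Section Contradiction.
Hypothesis phi_preserved : preserved_sub T phi.
Hypothesis top_neq_bot : \top != \bot :> A.
Hypothesis no_equivalent : forall psi, ~ universal_equivalent psi.

Let consequence := {xq | universal_consequence T phi xq}.

Lemma countermodel (D : seq consequence) : exists N : structure L A,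
  [/\ model T N, forall xq, List.In xq D -> holds N (FAlls (sval xq).1 (sval xq).2)
    & ~ holds N phi].
Proof.
apply: contrapT => /forallNP no_countermodel.
pose xq := conj_prenex (map sval D).
have [qf sent cons] : universal_consequence T phi xq.
  by apply: universal_consequence_conj => _ /List.in_map_iff [y [<- _]]; apply: svalP.
apply: (no_equivalent (psi := FAlls xq.1 xq.2)); split=> //; split; first by exists xq.1, xq.2.
move=> N N_model; split; first exact: cons.
move=> N_xq; apply: contrapT => N_nphi; apply: (no_countermodel N); split=> // y yD.
by move/holds_conj_prenex: N_xq; apply; apply: List.in_map.
Qed.

Lemma no_universal_equivalent_absurd : False.
Proof.
have [U [U_ultra U_fine]] := fine_ultrafilter consequence.
have [Ns NsP] := choice _ countermodel.
have N_model : model T (uprod U Ns) by apply: uprod_model => // D; case: (NsP D).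
have N_phi : holds (uprod U Ns) phi.
  apply: (consequences_model_holds phi_preserved top_neq_bot N_model) => xq xq_cons.
  apply/(uprod_holds Ns U_ultra).
  apply: filterS (U_fine (exist _ xq xq_cons)) => D xqD.
  by case: (NsP D) => _ /(_ _ xqD).
move/(uprod_holds Ns U_ultra)/filter_ex: N_phi => [D].
by case: (NsP D).
Qed.

End Contradiction.

Lemma universal_equivalent_preserved psi : universal_equivalent psi -> preserved_sub T phi.
Proof.
move=> [_ [psi_universal psi_equiv]] M N h h_substr M_model N_model.
move=> /(psi_equiv N N_model) N_psi.
exact/(psi_equiv M M_model)/(universal_holds_substr h_substr psi_universal).
Qed.

Theorem preserved_universal_equivalent :
  preserved_sub T phi -> exists psi, universal_equivalent psi.
Proof.
move=> phi_preserved; apply: contrapT => /forallNP no_equivalent.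
have [top_eq_bot|top_neq_bot] := eqVneq (\top : A) \bot.
  have all_top (a : A) : a = \top by apply/eqP; rewrite -le1x top_eq_bot le0x.
  apply: (no_equivalent (FConst \top)); split=> //; split; first by exists [::], (FConst \top).
  by move=> M _; split=> _ e; apply: all_top.
exact: (no_universal_equivalent_absurd phi_preserved top_neq_bot).
Qed.

End Universal_equivalent.

Theorem mainTheorem5 (d : Order.disp_t) (A : finTBOrderType d) (S : MTLchain A)
  (L : Lang) (T : fml L S -> Prop) (phi : fml L S) :
  (forall chi, T chi -> sentence chi) -> sentence phi ->
  (preserved_sub T phi <->
   exists psi : fml L S,
     sentence psi /\ universal psi /\
     (forall M : structure L A, model T M -> (holds M phi <-> holds M psi))).
Proof.
move=> _ _; split; first exact: preserved_universal_equivalent.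
by case=> psi; apply: universal_equivalent_preserved.
Qed.
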